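(* Let $n,k$ be integers with $1\le k$ and $n\ge k+2$. For real constants $c_0,\dots,c_{n-1}$ and an ordered bid vector $b_1\ge b_2\ge\dots\ge b_n\ge 0$, define for $i=1,\dots,n$ $$r_i=c_0+c_1b_1+\dots+c_{i-1}b_{i-1}+c_ib_{i+1}+\dots+c_{n-1}b_n.$$ Consider the optimization problem: maximize $f$ over $(f,c_0,\dots,c_{n-1})\in\mathbb{R}^{n+1}$ subject to, for every ordered bid vector $b_1\ge\dots\ge b_n\ge 0$: (i) $r_n\ge 0$; (ii) $\sum_{i=1}^n r_i\le k\,b_k$; (iii) $\sum_{i=1}^k r_i\ge f\cdot k\,b_{k+1}$. Then this problem has a unique optimal solution, namely $f^*=\frac{k}{n}$, $c_k^*=\frac{k}{n}$ and $c_i^*=0$ for all $i\ne k$. In particular the optimal worst-case fraction redistributed to the $k$ confirmed users is $k/n$, and the resulting mechanism (R-TFRM) is unique.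
   Context: Interpretation: in a block with $n$ included transactions whose bids are $b_1\ge\dots\ge b_n$, the top $k$ are confirmed and each pays $b_{k+1}$ minus the rebate $r_i$; included unconfirmed users pay $-r_i$. Constraint (i) encodes user individual rationality, (ii) an approximate miner individual rationality (total rebate at most $k\,b_k$), and (iii) that at least the fraction $f$ of the VCG payment $k\,b_{k+1}$ is returned to the confirmed users. *)

From mathcomp Require Import all_boot all_order all_algebra.
From mathcomp Require Import reals.
Set Implicit Arguments. Unset Strict Implicit. Unset Printing Implicit Defensive.
Import Order.TTheory GRing.Theory Num.Theory.
Local Open Scope ring_scope.

Section Defs.
Variable R : realType.

(* Bids are indexed 1..n (b : nat -> R, only b 1 .. b n matter);
   constants c 0 .. c (n-1) (c : nat -> R, only these indices matter). *)

Definition rebate (n : nat) (c b : nat -> R) (i : nat) : R :=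
  c 0%N + \sum_(1 <= j < i) c j * b j + \sum_(i <= j < n) c j * b j.+1.

Definition ordered_bids (n : nat) (b : nat -> R) : Prop :=
  (forall j, (1 <= j < n)%N -> b j.+1 <= b j) /\ 0 <= b n.

Definition feasible (n k : nat) (f : R) (c : nat -> R) : Prop :=
  forall b : nat -> R, ordered_bids n b ->
    [/\ 0 <= rebate n c b n,
        \sum_(1 <= i < n.+1) rebate n c b i <= k%:R * b k
      & f * (k%:R * b k.+1) <= \sum_(1 <= i < k.+1) rebate n c b i].

Definition optimal (n k : nat) (f : R) (c : nat -> R) : Prop :=
  feasible n k f c /\ (forall f' c', feasible n k f' c' -> f' <= f).

Definition cstar (n k : nat) (i : nat) : R :=
  if i == k then k%:R / n%:R else 0.

End Defs.

From mathcomp Require Import all_boot all_order all_algebra.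
From mathcomp Require Import reals.
From mathcomp Require Import zify lra.
Import Order.TTheory GRing.Theory Num.Theory.
Local Open Scope ring_scope.

(* On the step bid vector with m leading ones, b = (1,...,1,0,...,0), every
   rebate r_i equals c_0 + P_m (for i <= m) or c_0 + P_(m+1) (for i > m), where
   P_m = c_1 + ... + c_(m-1).  These vectors alone force c_0 = 0, P_m >= 0,
   f <= P_m for m > k, and m P_m + (n - m) P_(m+1) <= k [m >= k]; for m = n this
   gives f <= P_n <= k/n.  When f = k/n they pin down P_m = 0 for m <= k and
   P_m = k/n for m > k, i.e. c = c*.  Conversely c* pays k/n b_(k+1) to each of
   the k confirmed users and k/n b_k to the others, which meets (ii) because
   k b_(k+1) + (n - k) b_k <= n b_k. *)

Lemma sum_nat_delta (V : nmodType) (a b k : nat) (F : nat -> V) :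
  \sum_(a <= j < b) (if j == k then F j else 0) =
  if (a <= k < b)%N then F k else 0.
Proof.
elim: b => [|b IH]; first by rewrite big_geq // ltn0 andbF.
have [ab|ba] := leqP a b; last first.
  by rewrite big_geq //; case: ifP => // /andP[]; lia.
rewrite big_nat_recr //= IH; have [<-|bk] := eqVneq b k.
  by rewrite ltnn andbF add0r ab ltnSn.
by rewrite addr0 ltnS [(k <= b)%N]leq_eqVlt (eq_sym k) (negbTE bk).
Qed.

Lemma sum_nat_trunc (V : nmodType) (a b m : nat) (F : nat -> V) :
  \sum_(a <= j < b) (if (j < m)%N then F j else 0) = \sum_(a <= j < minn b m) F j.
Proof.
have [bm|mb] := leqP b m.
  by apply: eq_big_nat => j /andP[_ jb]; rewrite (leq_trans jb bm).
by rewrite (big_nat_widen _ _ _ _ _ (ltnW mb)) [RHS]big_mkcond.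
Qed.

Lemma sum_nat_ite (V : pzSemiRingType) (N m : nat) (x y : V) :
  \sum_(1 <= i < N.+1) (if (i <= m)%N then x else y) =
  (minn N m)%:R * x + (N - m)%:R * y.
Proof.
have [mN|Nm] := leqP m N.
  rewrite (big_cat_nat _ (n := m.+1)) //=.
  rewrite (eq_big_nat _ _ (F2 := fun _ => x)); last by move=> i /andP[_ /[!ltnS] ->].
  rewrite [X in _ + X](eq_big_nat _ _ (F2 := fun _ => y)); last first.
    by move=> i /andP[mi _]; rewrite leqNgt mi.
  by rewrite !sumr_const_nat subSS subn0 !mulr_natl.
rewrite (eq_big_nat _ _ (F2 := fun _ => x)); last first.
  by move=> i /andP[_ iN]; rewrite ifT //; lia.
by rewrite sumr_const_nat subSS subn0 mulr_natl (_ : N - m = 0)%N ?mul0r ?addr0 //; lia.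
Qed.

Section Bids.
Context {R : realType} {n : nat}.
Implicit Types (b c : nat -> R).

Lemma ordered_bids_le b i j :
  ordered_bids n b -> (0 < i <= j)%N -> (j <= n)%N -> b j <= b i.
Proof.
move=> [b_dec _] /andP[i_gt0 ij]; elim: j ij => [|j IH]; first by rewrite leqn0 => /eqP->.
rewrite leq_eqVlt ltnS => /orP[/eqP->//|ij] jn.
by apply: le_trans (IH ij (ltnW jn)); apply: b_dec; lia.
Qed.

Definition step_bids (m : nat) : nat -> R := fun j => if (j <= m)%N then 1 else 0.

Definition psum c (m : nat) : R := \sum_(1 <= j < m) c j.

Lemma psum1 c : psum c 1 = 0.
Proof. by rewrite /psum big_geq. Qed.

Lemma psumS c m : (0 < m)%N -> psum c m.+1 = psum c m + c m.
Proof. by move=> m_gt0; rewrite /psum big_nat_recr. Qed.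

Lemma ordered_bids_step m : ordered_bids n (step_bids m).
Proof.
split=> [j _|]; rewrite /step_bids; last by case: ifP.
by do 2!case: ifP => //; lia.
Qed.

Lemma rebate_step c m i : (m <= n)%N -> (0 < i)%N ->
  rebate n c (step_bids m) i = c 0%N + psum c (if (i <= m)%N then m else m.+1).
Proof.
move=> mn i_gt0; rewrite /rebate -addrA; congr (_ + _).
under eq_bigr do rewrite /step_bids -ltnS fun_if mulr1 mulr0.
under [X in _ + X]eq_bigr do rewrite /step_bids fun_if mulr1 mulr0.
rewrite !sum_nat_trunc (minn_idPr mn) /psum; case: leqP => [im|mi].
  by rewrite (minn_idPl (leqW im)) -big_cat_nat.
by rewrite (minn_idPr mi) [X in _ + X]big_geq ?addr0 // ltnW.
Qed.

Lemma sum_rebate_step c m N : (m <= n)%N ->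
  \sum_(1 <= i < N.+1) rebate n c (step_bids m) i =
  (minn N m)%:R * (c 0%N + psum c m) + (N - m)%:R * (c 0%N + psum c m.+1).
Proof.
move=> mn; rewrite -sum_nat_ite; apply: eq_big_nat => i /andP[i_gt0 _].
by rewrite rebate_step //; case: ifP.
Qed.

End Bids.

Section Mechanism.
Context {R : realType} {n k : nat}.
Hypotheses (k_gt0 : (0 < k)%N) (k_lt_n : (k < n)%N).
Implicit Types (b : nat -> R).

Let n_gt0 : (0 < n%:R :> R).
Proof. by rewrite ltr0n; lia. Qed.

Lemma cstar0 : cstar R n k 0 = 0.
Proof. by rewrite /cstar (ltn_eqF k_gt0). Qed.

Lemma rebate_cstar b i : (0 < i <= n)%N ->
  rebate n (cstar R n k) b i = k%:R / n%:R * b (if (i <= k)%N then k.+1 else k).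
Proof.
move=> /andP[i_gt0 i_le_n].
have cstar_mul (bb : nat -> R) j :
    cstar R n k j * bb j = if j == k then k%:R / n%:R * bb k else 0.
  by rewrite /cstar; case: eqP => [->|_]; rewrite ?mul0r.
rewrite /rebate cstar0 add0r (eq_bigr _ (fun j _ => cstar_mul b j)).
rewrite (eq_bigr _ (fun j _ => cstar_mul (fun j => b j.+1) j)) !sum_nat_delta /=.
have [ik|ki] := leqP i k.
  by rewrite ifF ?ifT ?add0r //; lia.
by rewrite ifT ?ifF ?addr0 //; lia.
Qed.

Lemma sum_rebate_cstar b N : (N <= n)%N ->
  \sum_(1 <= i < N.+1) rebate n (cstar R n k) b i =
  (minn N k)%:R * (k%:R / n%:R * b k.+1) + (N - k)%:R * (k%:R / n%:R * b k).
Proof.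
move=> Nn; rewrite -sum_nat_ite; apply: eq_big_nat => i /andP[i_gt0 iN].
by rewrite rebate_cstar; [case: ifP | lia].
Qed.

Lemma cstar_feasible : feasible n k (k%:R / n%:R) (cstar R n k).
Proof.
move=> b bids; have [b_dec bn_ge0] := bids.
have a_ge0 : 0 <= k%:R / n%:R :> R by rewrite divr_ge0 ?ler0n.
have an : k%:R / n%:R * n%:R = k%:R :> R by rewrite divfK ?gt_eqF.
have bk_ge0 : 0 <= b k.
  by apply: le_trans bn_ge0 (ordered_bids_le b k n bids _ _); lia.
have bk_gap : 0 <= b k - b k.+1 by rewrite subr_ge0 b_dec //; lia.
split.
- rewrite rebate_cstar; last lia.
  by rewrite leqNgt k_lt_n mulr_ge0.
- rewrite sum_rebate_cstar // (minn_idPr (ltnW k_lt_n)) natrB ?(ltnW k_lt_n) //.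
  have := mulr_ge0 (mulr_ge0 (ler0n _ k) a_ge0) bk_gap.
  set a := k%:R / n%:R in an a_ge0 *; nra.
- by rewrite sum_rebate_cstar ?(ltnW k_lt_n) // minnn subnn mul0r addr0 mulrCA.
Qed.

Section Necessary.
Context {f : R} {c : nat -> R}.
Hypothesis feas : feasible n k f c.

Lemma feasible_step_rebate_ge0 m : (m < n)%N -> 0 <= c 0%N + psum c m.+1.
Proof.
move=> mn; have [+ _ _] := feas _ (ordered_bids_step m).
rewrite rebate_step ?(ltnW mn) //; last lia.
by rewrite leqNgt mn.
Qed.

Lemma feasible_step_budget m : (m <= n)%N ->
  m%:R * (c 0%N + psum c m) + (n - m)%:R * (c 0%N + psum c m.+1) <=
  k%:R * step_bids m k.
Proof.
move=> mn; have [_ + _] := feas _ (ordered_bids_step m).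
by rewrite sum_rebate_step // (minn_idPr mn).
Qed.

Lemma feasible_step_share m : (k < m <= n)%N -> f <= c 0%N + psum c m.
Proof.
move=> /andP[km mn]; have [_ _ +] := feas _ (ordered_bids_step m).
rewrite sum_rebate_step // (minn_idPl (ltnW km)) (_ : k - m = 0)%N; last lia.
by rewrite mul0r addr0 /step_bids km mulr1 mulrC ler_pM2l ?ltr0n.
Qed.

Lemma feasible_c0 : c 0%N = 0.
Proof.
have := feasible_step_budget _ (leq0n n).
rewrite mul0r add0r subn0 psum1 addr0 /step_bids leqn0 (gtn_eqF k_gt0) mulr0.
rewrite pmulr_rle0 // => c0_le0; apply/eqP; rewrite eq_le c0_le0 /=.
have := feasible_step_rebate_ge0 0 (leq_trans k_gt0 (ltnW k_lt_n)).
by rewrite psum1 addr0.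
Qed.

Lemma feasible_psum_ge0 m : (0 < m <= n)%N -> 0 <= psum c m.
Proof.
case: m => [//|m] /andP[_ mn].
by have := feasible_step_rebate_ge0 _ mn; rewrite feasible_c0 add0r.
Qed.

Lemma feasible_share_le_psum m : (k < m <= n)%N -> f <= psum c m.
Proof. by move/feasible_step_share; rewrite feasible_c0 add0r. Qed.

Lemma feasible_psum_budget m : (m <= n)%N ->
  m%:R * psum c m + (n - m)%:R * psum c m.+1 <= k%:R * step_bids m k.
Proof. by move/feasible_step_budget; rewrite feasible_c0 !add0r. Qed.

Lemma feasible_share_le : f <= k%:R / n%:R.
Proof.
have := feasible_psum_budget _ (leqnn n).
rewrite subnn mul0r addr0 /step_bids (ltnW k_lt_n) mulr1 => budget.
rewrite ler_pdivlMr // mulrC; apply: le_trans budget.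
by rewrite ler_pM2l // feasible_share_le_psum // k_lt_n leqnn.
Qed.

Lemma feasible_psum_small m : (0 < m <= k)%N -> psum c m = 0.
Proof.
case: m => [//|[|m] /andP[_ mk]]; first exact: psum1.
have := feasible_psum_budget _ (ltnW (leq_trans mk (ltnW k_lt_n))).
rewrite /step_bids leqNgt mk mulr0 => budget.
apply/eqP; rewrite eq_le feasible_psum_ge0 ?andbT; last lia.
have gap : 0 < (n - m.+1)%:R :> R by rewrite ltr0n; lia.
rewrite -(pmulr_rle0 _ gap); apply: le_trans budget; rewrite lerDr.
by rewrite mulr_ge0 ?feasible_psum_ge0 //; lia.
Qed.

End Necessary.

Section Optimal.
Variable c : nat -> R.
Hypothesis feas : feasible n k (k%:R / n%:R) c.

Lemma optimal_psum_large j : (k < j <= n)%N -> psum c j = k%:R / n%:R.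
Proof.
move=> /andP[kj jn]; apply/eqP.
rewrite eq_le (feasible_share_le_psum feas) ?kj // andbT.
have := feasible_psum_budget feas _ jn; rewrite /step_bids (ltnW kj) mulr1.
move: jn; rewrite leq_eqVlt => /orP[/eqP-> | jn] budget.
  by move: budget; rewrite subnn mul0r addr0 ler_pdivlMr // mulrC.
have /(feasible_share_le_psum feas) : (k < j.+1 <= n)%N by lia.
have an : k%:R / n%:R * n%:R = k%:R :> R by rewrite divfK ?gt_eqF.
have j_gt0 : 0 < j%:R :> R by rewrite ltr0n; lia.
have nj : 0 < n%:R - j%:R :> R by rewrite subr_gt0 ltr_nat.
move: budget; rewrite natrB ?(ltnW jn) //; set a := k%:R / n%:R in an *; nra.
Qed.

Lemma optimal_psum j : (0 < j <= n)%N ->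
  psum c j = if (j <= k)%N then 0 else k%:R / n%:R.
Proof.
move=> /andP[j_gt0 jn]; case: leqP => [jk|kj].
  by rewrite (feasible_psum_small feas) // j_gt0.
by rewrite optimal_psum_large // kj.
Qed.

Lemma optimal_cstar i : (i < n)%N -> c i = cstar R n k i.
Proof.
case: i => [_|i lt_i_n]; first by rewrite (feasible_c0 feas) cstar0.
have := psumS c i.+1 (ltn0Sn i); rewrite !optimal_psum ?ltn0Sn ?(ltnW lt_i_n) //.
rewrite /cstar; case: (ltngtP i.+1 k) => _.
- by rewrite add0r.
- by move/eqP; rewrite -subr_eq0 opprD addNKr oppr_eq0 => /eqP.
- by rewrite add0r.
Qed.

End Optimal.

End Mechanism.

Theorem theorem4 (R : realType) (n k : nat) :
  (1 <= k)%N -> (k + 2 <= n)%N ->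
  optimal n k ((k%:R / n%:R) : R) (cstar R n k) /\
  (forall (f : R) (c : nat -> R), optimal n k f c ->
     f = k%:R / n%:R /\ (forall i, (i < n)%N -> c i = cstar R n k i)).
Proof.
move=> k_gt0 kn; have k_lt_n : (k < n)%N by lia.
have cstar_feas := cstar_feasible (R := R) k_gt0 k_lt_n.
split; first by split=> // f c /(feasible_share_le k_gt0 k_lt_n).
move=> f c [feas f_max].
have f_opt : f = k%:R / n%:R.
  apply/eqP; rewrite eq_le (f_max _ _ cstar_feas) andbT.
  exact: (feasible_share_le k_gt0 k_lt_n feas).
by split=> //; rewrite f_opt in feas; apply: optimal_cstar.
Qed.
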